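(* Let $K\subset\mathbb{R}^d$ be a convex body (not necessarily centrally symmetric). Let $\mathcal{K}=\{o_i+\tau_iK: i=1,\dots,n\}$ with $o_i\in\mathbb{R}^d$ and $\tau_1,\dots,\tau_n>0$ be a non-separable family of positive homothetic copies of $K$. Then there is a translate of $\frac{d+1}{2}\left(\sum_{i=1}^n\tau_i\right)K$ that covers $\bigcup\mathcal{K}$.
   Context: A convex body is a compact convex set with nonempty interior. A family $\mathcal{K}$ of convex bodies in $\mathbb{R}^d$ is called non-separable if every hyperplane $H$ that intersects $\operatorname{conv}\bigcup\mathcal{K}$ intersects some member of $\mathcal{K}$. *)

From Stdlib Require Import Reals.
From mathcomp Require Import all_boot.

Set Implicit Arguments.
Unset Strict Implicit.
Unset Printing Implicit Defensive.

Local Open Scope R_scope.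

Definition vec (d : nat) := 'I_d -> R.

Definition vadd {d} (x y : vec d) : vec d := fun i => x i + y i.
Definition vsub {d} (x y : vec d) : vec d := fun i => x i - y i.
Definition vscale {d} (t : R) (x : vec d) : vec d := fun i => t * x i.

Definition dot {d} (x y : vec d) : R := \big[Rplus/0]_(i < d) (x i * y i).
Definition vnorm {d} (x : vec d) : R := sqrt (dot x x).

Definition ball {d} (c : vec d) (r : R) : vec d -> Prop :=
  fun x => vnorm (vsub x c) < r.

Definition is_open {d} (S : vec d -> Prop) : Prop :=
  forall x, S x -> exists r, 0 < r /\ forall y, ball x r y -> S y.
Definition is_closed {d} (S : vec d -> Prop) : Prop :=
  is_open (fun x => ~ S x).
Definition bounded {d} (S : vec d -> Prop) : Prop :=
  exists M, forall x, S x -> vnorm x <= M.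
(* Compact subsets of R^d (Heine--Borel). *)
Definition compact {d} (S : vec d -> Prop) : Prop := is_closed S /\ bounded S.

Definition convex {d} (S : vec d -> Prop) : Prop :=
  forall x y t, S x -> S y -> 0 <= t <= 1 ->
    S (vadd (vscale t x) (vscale (1 - t) y)).

Definition nonempty_interior {d} (S : vec d -> Prop) : Prop :=
  exists x r, 0 < r /\ forall y, ball x r y -> S y.

Definition convex_body {d} (K : vec d -> Prop) : Prop :=
  compact K /\ convex K /\ nonempty_interior K.

Definition conv {d} (S : vec d -> Prop) : vec d -> Prop :=
  fun x => forall C, convex C -> (forall y, S y -> C y) -> C x.

Definition homot {d} (o : vec d) (tau : R) (K : vec d -> Prop) : vec d -> Prop :=
  fun x => exists k, K k /\ x = vadd o (vscale tau k).

Definition hyperplane {d} (a : vec d) (b : R) : vec d -> Prop :=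
  fun x => dot a x = b.
Definition nonzero {d} (a : vec d) : Prop := exists i, a i <> 0.

Definition family_union {d n} (F : 'I_n -> vec d -> Prop) : vec d -> Prop :=
  fun x => exists i, F i x.

Definition non_separable {d n} (F : 'I_n -> vec d -> Prop) : Prop :=
  forall (a : vec d) (b : R), nonzero a ->
    (exists x, conv (family_union F) x /\ hyperplane a b x) ->
    exists i x, F i x /\ hyperplane a b x.

(* Fix a direction u and let h(u), h(-u) be the support values of K.  The homothet o_i + tau_i K
   projects onto an interval of length tau_i (h(u) + h(-u)), and non-separability says that these
   intervals have a connected union.  Removing the interval whose right end is leftmost, an
   induction shows that the right end of the union exceeds the length-weighted mean of the
   midpoints by at most half the total length.  Together with the asymmetry bound -K <= y + D K
   (D = 1 on the line, D slightly above d in general, from a simplex of nearly maximal volume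
   inscribed in K) this bounds the support function of the union by that of a single homothet
   t + s K, and separation turns the support bound into the inclusion. *)

From Stdlib Require Import Reals Lra Psatz Classical FunctionalExtensionality.
From mathcomp Require Import all_boot all_order all_algebra perm Rstruct.

Set Implicit Arguments.
Unset Strict Implicit.
Unset Printing Implicit Defensive.

Local Open Scope R_scope.

Section RealSums.
Variable I : Type.
Implicit Types (s : seq I) (P : pred I) (F G : I -> R).

Lemma Rsum_opp s F : - (\big[Rplus/0]_(i <- s) F i) = \big[Rplus/0]_(i <- s) - F i.
Proof. exact: (big_morph _ Ropp_plus_distr Ropp_0). Qed.

Lemma Rsum_le s P F G : (forall i, P i -> F i <= G i) ->
  \big[Rplus/0]_(i <- s | P i) F i <= \big[Rplus/0]_(i <- s | P i) G i.
Proof. by apply: (big_ind2 Rle); [lra | move=> *; lra]. Qed.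

Lemma Rsum_ge0 s P F : (forall i, P i -> 0 <= F i) -> 0 <= \big[Rplus/0]_(i <- s | P i) F i.
Proof. by apply: (big_ind (Rle 0)); [lra | move=> *; lra]. Qed.

Lemma Rsum_weights_eq0 s (w f : I -> R) : (forall i, 0 <= w i) ->
  \big[Rplus/0]_(i <- s) w i = 0 -> \big[Rplus/0]_(i <- s) (w i * f i) = 0.
Proof.
move=> w_ge0; elim: s => [|a s IH]; rewrite ?big_nil ?big_cons // => wsum0.
have ws_ge0 : 0 <= \big[Rplus/0]_(i <- s) w i by apply: Rsum_ge0.
have wa_ge0 := w_ge0 a.
have -> : w a = 0 by lra.
by rewrite IH; [ring | lra].
Qed.

Lemma Rsum_sq_le s F : (forall i, 0 <= F i) ->
  \big[Rplus/0]_(i <- s) (F i * F i) <= \big[Rplus/0]_(i <- s) F i * \big[Rplus/0]_(i <- s) F i.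
Proof.
move=> F_ge0; elim: s => [|a s IH]; rewrite ?big_nil ?big_cons; first lra.
have : 0 <= \big[Rplus/0]_(i <- s) F i by apply: Rsum_ge0.
have := F_ge0 a; nra.
Qed.

End RealSums.

(* Merges sums over a common range into one sum and reduces the goal to the summands. *)
Ltac combine_sums :=
  rewrite /Rminus; repeat progress (rewrite ?Rsum_opp ?big_distrr -?big_split);
  apply: eq_bigr => ? _ /=.

Lemma Rsum_const_ord n c : \big[Rplus/0]_(j < n) c = INR n * c.
Proof.
elim: n => [|n IH]; first by rewrite big_ord0 /=; ring.
by rewrite big_ord_recr IH S_INR /=; ring.
Qed.

Lemma Rsum_gt0_ord n (F : 'I_n.+1 -> R) : (forall i, 0 < F i) -> 0 < \big[Rplus/0]_(i < n.+1) F i.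
Proof.
move=> F_gt0; rewrite big_ord_recl.
have : 0 <= \big[Rplus/0]_(i < n) F (lift ord0 i) by apply: Rsum_ge0 => i _; apply: Rlt_le.
have := F_gt0 ord0; lra.
Qed.

Lemma exists_argmin_seq (I : eqType) (s : seq I) (f : I -> R) : s <> [::] ->
  exists p, p \in s /\ forall i, i \in s -> f p <= f i.
Proof.
case: s => [//|a s] _; elim: s a => [|b s IH] a.
  by exists a; split=> [|i]; rewrite ?mem_seq1 // => /eqP ->; lra.
have [p [ps p_min]] := IH b.
case: (Rle_lt_dec (f a) (f p)) => ap.
- exists a; split; first exact: mem_head.
  move=> i; rewrite in_cons => /orP [/eqP -> | i_s]; [lra | have := p_min i i_s; lra].
- exists p; split; first by rewrite in_cons ps orbT.
  move=> i; rewrite in_cons => /orP [/eqP -> | i_s]; [lra | exact: p_min].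
Qed.

Lemma exists_argmax (I : finType) (f : I -> R) (i0 : I) : exists m, forall i, f i <= f m.
Proof.
have [|m [_ m_max]] := exists_argmin_seq (fun i => - f i) (s := index_enum I).
  by move=> enum0; have := mem_index_enum i0; rewrite enum0.
by exists m => i; have := m_max i (mem_index_enum i); lra.
Qed.

Lemma is_lub_approx (E : R -> Prop) m b : is_lub E m -> b < m -> exists x, E x /\ b < x.
Proof.
move=> [_ m_least] bm; apply: NNPP => none.
suff : m <= b by lra.
apply: m_least => x Ex; apply: Rnot_lt_le => bx; apply: none; by exists x.
Qed.

Section Vectors.
Variable d : nat.
Implicit Types (x y z u : vec d).

Lemma dot_vadd_r u x y : dot u (vadd x y) = dot u x + dot u y.
Proof. rewrite /dot; combine_sums; rewrite /vadd; ring. Qed.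

Lemma dot_vsub_r u x y : dot u (vsub x y) = dot u x - dot u y.
Proof. rewrite /dot; combine_sums; rewrite /vsub; ring. Qed.

Lemma dot_vscale_r u (c : R) x : dot u (vscale c x) = c * dot u x.
Proof. rewrite /dot; combine_sums; rewrite /vscale; ring. Qed.

Lemma dot_vscale_l u (c : R) x : dot (vscale c u) x = c * dot u x.
Proof. rewrite /dot; combine_sums; rewrite /vscale; ring. Qed.

Lemma dot_sum_r n u (w : 'I_n -> R) (o : 'I_n -> vec d) :
  dot u (fun j => \big[Rplus/0]_(i < n) (w i * o i j)) = \big[Rplus/0]_(i < n) (w i * dot u (o i)).
Proof.
rewrite /dot; under eq_bigr do rewrite big_distrr.
rewrite exchange_big; apply: eq_bigr => i _; rewrite big_distrr.
by apply: eq_bigr => c _ /=; ring.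
Qed.

Lemma dot_ge0 x : 0 <= dot x x.
Proof. by apply: Rsum_ge0 => i _; nra. Qed.

Lemma sqr_coord_le_dot x i : x i * x i <= dot x x.
Proof.
rewrite /dot (bigD1 i) //= -[X in X <= _]Rplus_0_r.
by apply: Rplus_le_compat_l; apply: Rsum_ge0 => j _; nra.
Qed.

Lemma nonzero_dot_gt0 u : nonzero u -> 0 < dot u u.
Proof.
case=> i ui_neq0; have := sqr_coord_le_dot u i.
have := Rsqr_pos_lt _ ui_neq0; rewrite /Rsqr; lra.
Qed.

Lemma dot_gt0_nonzero u : 0 < dot u u -> nonzero u.
Proof.
move=> uu_gt0; apply: NNPP => u0; suff : dot u u = 0 by lra.
rewrite /dot big1 // => i _.
have -> : u i = 0 by apply: NNPP => ui; apply: u0; exists i.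
ring.
Qed.

Lemma dot_le_of_vnorm_le x M : vnorm x <= M -> dot x x <= M * M.
Proof.
rewrite /vnorm => xM; have := sqrt_sqrt _ (dot_ge0 x); have := sqrt_pos (dot x x); nra.
Qed.

Definition sqdist x y : R := dot (vsub x y) (vsub x y).

Lemma sqdist_sym x y : sqdist x y = sqdist y x.
Proof. by apply: eq_bigr => i _; rewrite /vsub; ring. Qed.

Lemma ball_iff (c : vec d) r y : 0 < r -> ball c r y <-> sqdist y c < r * r.
Proof.
move=> r_gt0; rewrite /ball /vnorm /sqdist; have := dot_ge0 (vsub y c).
set q := dot _ _ => q_ge0; split=> H.
- have := sqrt_sqrt q q_ge0; have := sqrt_pos q; nra.
- rewrite -(sqrt_square r); [apply: sqrt_lt_1_alt; lra | lra].
Qed.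

Lemma ball_center (c : vec d) r : 0 < r -> ball c r c.
Proof.
move=> r_gt0; apply/ball_iff => //.
rewrite (_ : sqdist c c = 0); first nra.
by rewrite /sqdist /dot big1 // => i _; rewrite /vsub; ring.
Qed.

Lemma coord_abs_le x M i : vnorm x <= M -> Rabs (x i) <= M.
Proof.
move=> xM; have M_ge0 : 0 <= M by have := sqrt_pos (dot x x); rewrite /vnorm in xM; lra.
have := dot_le_of_vnorm_le xM; have := sqr_coord_le_dot x i => *.
apply: Rabs_le; split; nra.
Qed.

End Vectors.

Section ConvexSets.
Variable d : nat.
Implicit Types (K : vec d -> Prop).

Lemma convex_weighted_mean K (I : Type) (s : seq I) (w : I -> R) (v : I -> vec d) :
  convex K -> (forall i, 0 <= w i) -> (forall i, K (v i)) -> 0 < \big[Rplus/0]_(i <- s) w i ->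
  K (fun c => \big[Rplus/0]_(i <- s) (w i * v i c) / \big[Rplus/0]_(i <- s) w i).
Proof.
move=> Kcvx w_ge0 Kv; elim: s => [|a s IH]; first by rewrite big_nil; lra.
rewrite big_cons; set W := \big[Rplus/0]_(j <- s) w j => W_gt0.
have W_ge0 : 0 <= W by apply: Rsum_ge0.
have wa_ge0 := w_ge0 a.
case: (Rle_lt_or_eq_dec 0 W W_ge0) => [W_pos | W0].
- have t01 : 0 <= w a / (w a + W) <= 1.
    have : w a / (w a + W) * (w a + W) = w a by field; lra.
    by move=> ?; split; nra.
  have := Kcvx (v a) _ _ (Kv a) (IH W_pos) t01.
  congr K; apply: functional_extensionality => c; rewrite /vadd /vscale big_cons -/W.
  by field; lra.
- have wa_gt0 : 0 < w a by lra.
  suff -> : (fun c => \big[Rplus/0]_(i <- a :: s) (w i * v i c) / (w a + W)) = v a by [].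
  apply: functional_extensionality => c.
  by rewrite big_cons Rsum_weights_eq0 // -W0; field; lra.
Qed.

Lemma homot_scale_le K x0 t c s x : convex K -> K x0 -> 0 <= c <= s -> 0 < s ->
  homot t c K x -> homot (vsub t (vscale (s - c) x0)) s K x.
Proof.
move=> Kcvx Kx0 cs s_gt0 [k [Kk ->]].
exists (vadd (vscale (c / s) k) (vscale (1 - c / s) x0)); split.
  apply: Kcvx => //; have : c / s * s = c by field; lra.
  by move=> ?; nra.
by apply: functional_extensionality => i; rewrite /vadd /vsub /vscale; field; lra.
Qed.

Lemma convex_body_nonempty K : convex_body K -> exists k, K k.
Proof. by move=> [_ [_ [x [r [r_gt0 rK]]]]]; exists x; apply: rK; apply: ball_center. Qed.

Lemma closed_mem_of_approx K c : is_closed K ->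
  (forall eps, 0 < eps -> exists k, K k /\ ball c eps k) -> K c.
Proof.
move=> Kcl near; apply: NNPP => Kc.
have [r [r_gt0 rK]] := Kcl c Kc; have [k [Kk ck]] := near r r_gt0.
exact: rK k ck Kk.
Qed.

End ConvexSets.

Section Separation.
Variable d : nat.
Implicit Types (K : vec d -> Prop) (x y z u k p q : vec d).

Lemma sqdist_convex_comb z p k t :
  sqdist z (vadd (vscale t k) (vscale (1 - t) p)) =
  sqdist z p - 2 * t * dot (vsub z p) (vsub k p) + t * t * sqdist k p.
Proof. rewrite /sqdist /dot; combine_sums; rewrite /vadd /vscale /vsub; ring. Qed.

Lemma bounded_sqdist K : bounded K ->
  exists C, 0 < C /\ forall k p, K k -> K p -> sqdist k p <= C.
Proof.
case=> M KM; exists (4 * (M * M) + 1); split; first by nra.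
move=> k p Kk Kp.
have : 2 * dot k k + 2 * dot p p - sqdist k p = dot (vadd k p) (vadd k p).
  by rewrite /sqdist /dot; combine_sums; rewrite /vadd /vsub; ring.
have := dot_ge0 (vadd k p).
have := dot_le_of_vnorm_le (KM k Kk); have := dot_le_of_vnorm_le (KM p Kp); lra.
Qed.

Lemma sqdist_near_min K z eps : (exists k, K k) -> 0 < eps ->
  exists p, K p /\ forall q, K q -> sqdist z p < sqdist z q + eps.
Proof.
move=> [k0 Kk0] eps_gt0.
pose E v := exists k, K k /\ v = - sqdist z k.
have [m m_lub] : exists m, is_lub E m.
  apply: upper_bound_thm; last by exists (- sqdist z k0), k0.
  by exists 0 => v [k [_ ->]]; have := dot_ge0 (vsub z k); rewrite /sqdist; lra.
have [_ [[p [Kp ->]] near]] := is_lub_approx m_lub (b := m - eps) ltac:(lra).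
exists p; split=> // q Kq.
have := m_lub.1 (- sqdist z q) (ex_intro _ q (conj Kq erefl)); lra.
Qed.

Lemma near_min_variational K z p k eta t : convex K -> K p -> K k -> 0 <= t <= 1 ->
  (forall q, K q -> sqdist z p < sqdist z q + eta) ->
  2 * t * dot (vsub z p) (vsub k p) < t * t * sqdist k p + eta.
Proof.
move=> Kcvx Kp Kk t01 pmin.
have := pmin _ (Kcvx k p t Kk Kp t01); rewrite sqdist_convex_comb; lra.
Qed.

Lemma separation K z : is_closed K -> convex K -> bounded K -> (exists k, K k) -> ~ K z ->
  exists u m, nonzero u /\ (forall k, K k -> dot u k <= m) /\ m < dot u z.
Proof.
move=> Kcl Kcvx Kbd Kne Kz.
have [r [r_gt0 rK]] := Kcl z Kz.
have far k : K k -> r * r <= sqdist z k.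
  move=> Kk; apply: Rnot_lt_le => close; apply: (rK k) => //.
  by apply/ball_iff => //; rewrite sqdist_sym.
have [C [C_gt0 diam]] := bounded_sqdist Kbd.
pose t := Rmin 1 (r * r / (2 * C)).
have t_gt0 : 0 < t by apply: Rmin_pos; [lra | apply: Rdiv_lt_0_compat; nra].
have t_le1 : t <= 1 by apply: Rmin_l.
have tC : t * C <= r * r / 2.
  have : t <= r * r / (2 * C) by apply: Rmin_r.
  have -> : r * r / 2 = r * r / (2 * C) * C by field; lra.
  by move=> ?; apply: Rmult_le_compat_r; lra.
have [p [Kp pmin]] : exists p, K p /\ forall q, K q -> sqdist z p < sqdist z q + t * (r * r) / 2.
  apply: sqdist_near_min => //.
  have := Rmult_lt_0_compat _ _ t_gt0 (Rmult_lt_0_compat _ _ r_gt0 r_gt0); lra.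
have zp_far := far p Kp.
exists (vsub z p), (dot (vsub z p) p + r * r / 2); split; last split.
- by apply: dot_gt0_nonzero; rewrite -/(sqdist z p); nra.
- move=> k Kk; have := near_min_variational Kcvx Kp Kk (conj (Rlt_le _ _ t_gt0) t_le1) pmin.
  rewrite dot_vsub_r => var.
  have : t * t * sqdist k p <= t * (r * r / 2).
    by have := diam k p Kk Kp; have := dot_ge0 (vsub k p); rewrite /sqdist; nra.
  nra.
- have : dot (vsub z p) (vsub z p) = dot (vsub z p) z - dot (vsub z p) p by apply: dot_vsub_r.
  rewrite -/(sqdist z p); nra.
Qed.

End Separation.

Section SupportFunction.
Variable d : nat.
Implicit Types (K : vec d -> Prop) (x y z u k : vec d).

Definition dot_image K u : R -> Prop := fun v => exists k, K k /\ v = dot u k.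

Lemma support_exists K u : bounded K -> (exists k, K k) -> exists h, is_lub (dot_image K u) h.
Proof.
move=> [M KM] [k0 Kk0]; apply: upper_bound_thm; last by exists (dot u k0), k0.
exists (\big[Rplus/0]_(i < d) (Rabs (u i) * M)) => v [k [Kk ->]].
apply: Rsum_le => i _; apply: Rle_trans (Rle_abs _) _; rewrite Rabs_mult.
by apply: Rmult_le_compat_l; [apply: Rabs_pos | apply: coord_abs_le; apply: KM].
Qed.

Lemma homot_of_support_le K t c x : is_closed K -> convex K -> bounded K -> (exists k, K k) ->
  0 < c -> (forall u h, nonzero u -> is_lub (dot_image K u) h -> dot u x <= dot u t + c * h) ->
  homot t c K x.
Proof.
move=> Kcl Kcvx Kbd Kne c_gt0 x_le.
pose z := vscale (/ c) (vsub x t).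
have x_eq : x = vadd t (vscale c z).
  by apply: functional_extensionality => i; rewrite /z /vadd /vscale /vsub; field; lra.
suff Kz : K z by exists z.
apply: NNPP => Kz; have [u [m [u_neq0 [Km mz]]]] := separation Kcl Kcvx Kbd Kne Kz.
have [h h_lub] := support_exists u Kbd Kne.
have hm : h <= m by apply: h_lub.2 => v [k [Kk ->]]; apply: Km.
have := x_le u h u_neq0 h_lub.
rewrite {1}x_eq dot_vadd_r dot_vscale_r; nra.
Qed.

Lemma support_homot K o tau u h : 0 < tau -> is_lub (dot_image K u) h ->
  is_lub (dot_image (homot o tau K) u) (dot u o + tau * h).
Proof.
move=> tau_gt0 [h_ub h_least]; split.
- move=> v [_ [[k [Kk ->]] ->]]; rewrite dot_vadd_r dot_vscale_r.
  have := h_ub _ (ex_intro _ k (conj Kk erefl)); nra.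
- move=> b b_ub; set w := (b - dot u o) / tau.
  have b_eq : b = dot u o + tau * w by rewrite /w; field; lra.
  suff : h <= w by rewrite b_eq; nra.
  apply: h_least => _ [k [Kk ->]]; apply: (Rmult_le_reg_l tau) => //.
  have := b_ub _ (ex_intro _ _ (conj (ex_intro _ k (conj Kk erefl)) erefl)).
  rewrite dot_vadd_r dot_vscale_r; lra.
Qed.

Lemma support_width_gt0 K u hu g : nonempty_interior K -> nonzero u ->
  is_lub (dot_image K u) hu -> is_lub (dot_image K (vscale (-1) u)) g -> 0 < hu + g.
Proof.
move=> [x0 [r [r_gt0 rK]]] u_neq0 hu_lub g_lub.
have uu_gt0 := nonzero_dot_gt0 u_neq0.
pose del := r / (1 + dot u u).
have del_gt0 : 0 < del by apply: Rdiv_lt_0_compat; lra.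
have r_eq : r = del * (1 + dot u u) by rewrite /del; field; lra.
have K_shift sg : sg * sg = 1 -> K (vadd x0 (vscale (sg * del) u)).
  move=> sg2; apply: rK; apply/ball_iff => //.
  have -> : sqdist (vadd x0 (vscale (sg * del) u)) x0 = sg * sg * (del * del) * dot u u.
    by rewrite /sqdist /dot; combine_sums; rewrite /vsub /vadd /vscale; ring.
  rewrite sg2 r_eq; have := Rmult_lt_0_compat _ _ del_gt0 del_gt0; nra.
have := hu_lub.1 _ (ex_intro _ _ (conj (K_shift 1 ltac:(ring)) erefl)).
have := g_lub.1 _ (ex_intro _ _ (conj (K_shift (-1) ltac:(ring)) erefl)).
rewrite !dot_vscale_l !dot_vadd_r !dot_vscale_r; nra.
Qed.

Lemma support_opp_le K y D u hu g : 0 <= D -> (forall k, K k -> homot y D K (vscale (-1) k)) ->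
  is_lub (dot_image K u) hu -> is_lub (dot_image K (vscale (-1) u)) g -> g <= dot u y + D * hu.
Proof.
move=> D_ge0 Kopp hu_lub g_lub; apply: g_lub.2 => _ [k [Kk ->]].
have [k' [Kk' opp_k]] := Kopp k Kk.
have := hu_lub.1 _ (ex_intro _ k' (conj Kk' erefl)).
rewrite dot_vscale_l -dot_vscale_r opp_k dot_vadd_r dot_vscale_r; nra.
Qed.

End SupportFunction.

Section IntervalCover.
Variable I : eqType.
Implicit Types (s r : seq I) (a b : I -> R).

Definition interval_cover s a b (B : R) : Prop :=
  forall v, v < B -> (exists i, i \in s /\ a i < v) -> exists j, j \in s /\ a j <= v <= b j.

Lemma exists_gap_below r a c B : c < B -> (forall i, i \in r -> c < a i) ->
  exists v, c < v < B /\ forall i, i \in r -> v < a i.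
Proof.
move=> cB; elim: r => [|j r IH] ra; first by exists ((c + B) / 2); split; [lra | by []].
have [v [cvB rv]] := IH (fun i ir => ra i (ltac:(by rewrite in_cons ir orbT))).
have caj := ra j (mem_head j r).
pose m := Rmin v (a j).
have cm : c < m by apply: Rmin_glb_lt; lra.
have mv : m <= v := Rmin_l v (a j).
have maj : m <= a j := Rmin_r v (a j).
exists ((c + m) / 2); split; first lra.
move=> i; rewrite in_cons => /orP [/eqP -> | ir]; first lra.
have := rv i ir; lra.
Qed.

Lemma interval_cover_rem s a b B p : p \in s -> (forall i, i \in s -> b p <= b i) ->
  interval_cover s a b B -> interval_cover (rem p s) a b B.
Proof.
move=> ps pmin cov v vB [i [ir aiv]].
have [j [js jv]] := cov v vB (ex_intro _ i (conj (mem_rem ir) aiv)).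
move: js; rewrite (perm_mem (perm_to_rem ps)) in_cons => /orP [/eqP jp | jr]; last by exists j.
exists i; split => //; have := pmin i (mem_rem ir); rewrite jp in jv; lra.
Qed.

Lemma interval_cover_gap s a b B p L : p \in s -> a p <= b p ->
  interval_cover s a b B -> (forall i, i \in rem p s -> B - a i <= L) ->
  0 <= L -> B - b p <= L.
Proof.
move=> ps abp cov r_far L_ge0.
case: (classic (exists i, i \in rem p s /\ a i <= b p)) => [[i [ir aib]] | none].
  by have := r_far i ir; lra.
case: (Rle_lt_dec B (b p)) => [|bpB]; first lra.
have [v [[bpv vB] rv]] : exists v, b p < v < B /\ forall i, i \in rem p s -> v < a i.
  by apply: exists_gap_below => // i ir; apply: Rnot_le_lt => aib; apply: none; exists i.
have apv : a p < v by lra.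
have [j [js jv]] := cov v vB (ex_intro _ p (conj ps apv)).
move: js; rewrite (perm_mem (perm_to_rem ps)) in_cons => /orP [/eqP jp | jr].
- by rewrite jp in jv; lra.
- by have := rv j jr; lra.
Qed.

(* As (b - a) (2 B - a - b) = (B - a)^2 - (B - b)^2, the first claim says that B exceeds the
   length-weighted mean of the midpoints by at most L / 2. *)
Lemma interval_cover_sum_le s a b B :
  (forall i, i \in s -> a i <= b i <= B) -> interval_cover s a b B ->
  let L := \big[Rplus/0]_(i <- s) (b i - a i) in
  \big[Rplus/0]_(i <- s) ((b i - a i) * (2 * B - a i - b i)) <= L * L /\
  forall i, i \in s -> B - a i <= L.
Proof.
have [n] : exists n, (size s <= n)%N by exists (size s).
elim: n s => [|n IH] s s_size ab cov /=.
  by move: s_size; rewrite leqn0 => /nilP ->; rewrite !big_nil; split; [lra | by []].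
case: (altP (s =P [::])) => [-> | s_ne]; first by rewrite !big_nil; split; [lra | by []].
have [p [ps pmin]] := exists_argmin_seq b (elimN eqP s_ne).
have r_size : (size (rem p s) <= n)%N.
  by rewrite size_rem // -ltnS (leq_trans _ s_size) // prednK // lt0n size_eq0.
have [IH1 IH2] := IH _ r_size (fun i ir => ab i (mem_rem ir)) (interval_cover_rem ps pmin cov).
rewrite !(perm_big _ (perm_to_rem ps)) !big_cons /=.
set L := \big[Rplus/0]_(j <- rem p s) (b j - a j) in IH1 IH2 *.
have L_ge0 : 0 <= L by rewrite /L big_seq; apply: Rsum_ge0 => i /mem_rem /ab; lra.
have [abp bpB] := ab p ps.
have gap : B - b p <= L := interval_cover_gap ps abp cov IH2 L_ge0.
split; first nra.
move=> i; rewrite (perm_mem (perm_to_rem ps)) in_cons => /orP [/eqP -> | /IH2]; lra.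
Qed.

End IntervalCover.

Lemma non_separable_cover d n (F : 'I_n -> vec d -> Prop) u (a b : 'I_n -> R) m :
  non_separable F -> nonzero u ->
  (forall i, is_lub (dot_image (F i) u) (b i)) ->
  (forall i, is_lub (dot_image (F i) (vscale (-1) u)) (- a i)) ->
  interval_cover (index_enum 'I_n) a b (b m).
Proof.
move=> Fns u_neq0 b_lub a_lub v vbm [i [_ aiv]].
have [_ [[X1 [FX1 ->]] vX1]] := is_lub_approx (b_lub m) vbm.
have [_ [[X2 [FX2 ->]] X2v]] := is_lub_approx (a_lub i) (b := - v) ltac:(lra).
rewrite dot_vscale_l in X2v.
pose l := (v - dot u X2) / (dot u X1 - dot u X2).
have l_eq : l * (dot u X1 - dot u X2) = v - dot u X2 by rewrite /l; field; lra.
have l01 : 0 <= l <= 1 by split; nra.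
have Z_v : hyperplane u v (vadd (vscale l X1) (vscale (1 - l) X2)).
  by rewrite /hyperplane dot_vadd_r !dot_vscale_r; nra.
have [j [X [FX X_v]]] : exists j X, F j X /\ hyperplane u v X.
  apply: Fns => //; exists (vadd (vscale l X1) (vscale (1 - l) X2)); split => //.
  by move=> C Ccvx FC; apply: Ccvx => //; apply: FC; [exists m | exists i].
exists j; split; first exact: mem_index_enum.
have := (b_lub j).1 _ (ex_intro _ X (conj FX erefl)).
have := (a_lub j).1 _ (ex_intro _ X (conj FX erefl)).
rewrite dot_vscale_l; move: X_v; rewrite /hyperplane; lra.
Qed.

Section SimplexMatrix.
Import Order.TTheory GRing.Theory Num.Theory.
Local Open Scope ring_scope.

Lemma det_norm_le n (A : 'M[R]_n) C : (forall i j, `|A i j| <= C) ->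
  `|\det A| <= \sum_(s : 'S_n) C ^+ n.
Proof.
move=> A_le; rewrite /determinant; apply: le_trans (ler_norm_sum _ _ _) _.
apply: ler_sum => s _.
rewrite normrM normrX normrN1 expr1n mul1r normr_prod -[n in C ^+ n]card_ord -prodr_const.
by apply: ler_prod => i _; rewrite normr_ge0 /=; apply: A_le.
Qed.

Variables (d : nat) (x0 : vec d).

(* Row [j] holds the homogeneous coordinates [(1, v j - x0)], so [|\det (simplex_mx v)|] is
   [d!] times the volume of the simplex with vertices [v]. *)
Definition simplex_mx (v : 'I_d.+1 -> vec d) : 'M[R]_d.+1 :=
  \matrix_(j, c) oapp (fun i => v j i - x0 i) 1 (unlift ord0 c).

Definition affine_row (k : vec d) : 'rV[R]_d.+1 :=
  \row_c oapp (fun i => k i - x0 i) 1 (unlift ord0 c).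

Lemma simplex_mx_replace v j k (lam : 'rV[R]_d.+1) :
  lam *m simplex_mx v = affine_row k ->
  \det (simplex_mx (fun j' => if j' == j then k else v j')) = lam 0 j * \det (simplex_mx v).
Proof.
move=> lam_coords.
pose E : 'M[R]_d.+1 := \matrix_(a, b) if a == j then lam 0 b else (1%:M : 'M[R]_d.+1) a b.
have E_mul : E *m simplex_mx v = simplex_mx (fun j' => if j' == j then k else v j').
  apply/matrixP => a c; rewrite mxE [in RHS]mxE.
  under eq_bigr do rewrite /E mxE.
  case: (a == j).
    have := congr1 (fun M : 'rV[R]_d.+1 => M 0 c) lam_coords; rewrite /affine_row !mxE => <-.
    by apply: eq_bigr.
  have := congr1 (fun M : 'M[R]_d.+1 => M a c) (mul1mx (simplex_mx v)).
  by rewrite [in RHS]mxE mxE => <-; apply: eq_bigr.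
have detE : \det E = lam 0 j.
  rewrite (expand_det_col _ j) (bigD1 j) //= big1; last first.
    by move=> a /negPf aj; rewrite /E !mxE aj mul0r.
  rewrite addr0 /E !mxE eqxx /cofactor.
  have -> : row' j (col' j E) = 1%:M.
    by apply/matrixP => a b; rewrite !mxE eq_sym (negPf (neq_lift j a)) (inj_eq lift_inj).
  by rewrite det1 mulr1 -signr_odd addnn odd_double expr0 mulr1.
by rewrite -E_mul det_mulmx detE.
Qed.

Lemma simplex_mx_coords v k (lam : 'rV[R]_d.+1) :
  lam *m simplex_mx v = affine_row k ->
  \sum_j lam 0 j = 1 /\ forall i, \sum_j lam 0 j * (v j i - x0 i) = k i - x0 i.
Proof.
move=> lam_coords; split.
  have := congr1 (fun M : 'rV[R]_d.+1 => M 0 ord0) lam_coords.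
  rewrite !mxE unlift_none /= => <-.
  by apply: eq_bigr => j _; rewrite !mxE unlift_none mulr1.
move=> i; have := congr1 (fun M : 'rV[R]_d.+1 => M 0 (lift ord0 i)) lam_coords.
rewrite !mxE liftK /= => <-.
by apply: eq_bigr => j _; rewrite !mxE liftK.
Qed.

Definition corner_simplex (e : R) (j : 'I_d.+1) : vec d :=
  fun i => x0 i + (if unlift ord0 j is Some a then (if a == i then e else 0) else 0).

Lemma det_corner_simplex_neq0 e : e != 0 -> \det (simplex_mx (corner_simplex e)) != 0.
Proof.
move=> e_neq0; rewrite det_trig; last first.
  apply/is_trig_mxP => a c ac; rewrite mxE /corner_simplex.
  case: (unliftP ord0 c) => [i' ci|c0]; last by move: ac; rewrite c0 ltn0.
  rewrite /= [x0 _ + _]addrC addrK.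
  case: (unliftP ord0 a) => [a' aa|a0]; last by [].
  by case: eqP => // ai; move: ac; rewrite aa ci ai ltnn.
rewrite prodf_seq_neq0; apply/allP => j _ /=; rewrite mxE /corner_simplex.
case: (unliftP ord0 j) => [a ja|j0] /=; last exact: oner_neq0.
by rewrite [x0 _ + _]addrC addrK eqxx.
Qed.

End SimplexMatrix.


Section Asymmetry.
Variable d : nat.
Implicit Types (K : vec d -> Prop) (v w : 'I_d.+1 -> vec d).

Definition simplex_volume (x0 : vec d) v : R := Rabs (\det (simplex_mx x0 v))%R.

Lemma simplex_volume_bounded K (x0 : vec d) : bounded K -> K x0 ->
  exists B, forall v, (forall j, K (v j)) -> simplex_volume x0 v <= B.
Proof.
move=> [M KM] Kx0.
have M_ge0 : 0 <= M by have := KM x0 Kx0; have := sqrt_pos (dot x0 x0); rewrite /vnorm; lra.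
pose C := 1 + 2 * M.
exists (\sum_(s : 'S_d.+1) C ^+ d.+1)%R => v Kv; apply/RleP.
apply: det_norm_le => j c; rewrite mxE; apply/RleP.
case: (unlift ord0 c) => [i|] /=; last by change (Rabs 1 <= C); rewrite Rabs_R1 /C; lra.
change (Rabs (v j i - x0 i) <= C).
have := coord_abs_le i (KM _ (Kv j)); have := coord_abs_le i (KM _ Kx0).
have := Rabs_triang (v j i) (- x0 i); rewrite Rabs_Ropp /C /Rminus; lra.
Qed.

Lemma corner_simplex_mem K (x0 : vec d) r : (forall y, ball x0 r y -> K y) -> 0 < r ->
  forall j, K (corner_simplex x0 (r / 2) j).
Proof.
move=> rK r_gt0 j; apply: rK; apply/ball_iff => //.
have -> : sqdist (corner_simplex x0 (r / 2) j) x0 =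
    \big[Rplus/0]_(i < d)
      (if unlift ord0 j is Some a then (if a == i then r / 2 * (r / 2) else 0) else 0).
  apply: eq_bigr => i _; rewrite /vsub /corner_simplex -!RplusE.
  change (0%R : R) with 0.
  by case: (unlift ord0 j) => [a|]; [case: (a == i) |]; ring.
case: (unlift ord0 j) => [a|]; last by rewrite big1 //; nra.
rewrite (bigD1 a) //= eqxx big1; last by move=> i /negPf; rewrite eq_sym => ->.
nra.
Qed.

Lemma exists_near_max_simplex K rho : convex_body K -> 1 < rho ->
  exists x0 v, (forall j, K (v j)) /\ 0 < simplex_volume x0 v /\
    forall w, (forall j, K (w j)) -> simplex_volume x0 w < rho * simplex_volume x0 v.
Proof.
move=> [[_ K_bounded] [_ [x0 [r [r_gt0 rK]]]]] rho_gt1.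
have Kx0 : K x0 by apply: rK; apply: ball_center.
have [B B_ge] := simplex_volume_bounded K_bounded Kx0.
have corner_K := corner_simplex_mem rK r_gt0.
set v0 := corner_simplex x0 (r / 2).
pose E t := exists v, (forall j, K (v j)) /\ t = simplex_volume x0 v.
have [V V_lub] : exists V, is_lub E V.
  apply: upper_bound_thm; last by exists (simplex_volume x0 v0), v0.
  by exists B => t [v [Kv ->]]; apply: B_ge.
have v0_pos : 0 < simplex_volume x0 v0.
  apply: Rabs_pos_lt; apply/eqP; apply: det_corner_simplex_neq0.
  by apply/eqP; change (r / 2 <> 0); lra.
have v0_le : simplex_volume x0 v0 <= V by apply: V_lub.1; exists v0.
have V_rho : V / rho * rho = V by field; lra.
have [_ [[v [Kv ->]] v_big]] := is_lub_approx V_lub (b := V / rho) ltac:(nra).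
exists x0, v; split=> //; split; first by nra.
move=> w Kw; have := V_lub.1 _ (ex_intro _ w (conj Kw erefl)); nra.
Qed.

Lemma barycentric_lt K (x0 : vec d) v rho k :
  (forall j, K (v j)) -> 0 < simplex_volume x0 v ->
  (forall w, (forall j, K (w j)) -> simplex_volume x0 w < rho * simplex_volume x0 v) -> K k ->
  exists lam : 'I_d.+1 -> R, \big[Rplus/0]_(j < d.+1) lam j = 1 /\
    (forall i, \big[Rplus/0]_(j < d.+1) (lam j * v j i) = k i) /\ forall j, lam j < rho.
Proof.
move=> Kv v_pos v_max Kk.
have v_unit : simplex_mx x0 v \in unitmx.
  rewrite unitmxE GRing.unitfE; apply/eqP => det0.
  by move: v_pos; rewrite /simplex_volume det0 Rabs_R0; lra.
pose lam := (affine_row x0 k *m invmx (simplex_mx x0 v))%R.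
have lam_coords : (lam *m simplex_mx x0 v = affine_row x0 k)%R by rewrite /lam mulmxKV.
have [sum1 coords] := simplex_mx_coords lam_coords.
exists (fun j => lam ord0 j); split; first exact: sum1.
split=> [i | j].
- have : \big[Rplus/0]_(j < d.+1) (lam ord0 j * (v j i - x0 i)) =
      \big[Rplus/0]_(j < d.+1) (lam ord0 j * v j i) - x0 i * \big[Rplus/0]_(j < d.+1) lam ord0 j.
    by combine_sums; ring.
  have -> : \big[Rplus/0]_(j < d.+1) (lam ord0 j * (v j i - x0 i)) = k i - x0 i := coords i.
  have -> : \big[Rplus/0]_(j < d.+1) lam ord0 j = 1 := sum1.
  lra.
- have Kw j' : K (if j' == j then k else v j') by case: (j' == j).
  have := v_max _ Kw.
  rewrite /simplex_volume (simplex_mx_replace j lam_coords) -RmultE Rabs_mult.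
  rewrite -/(simplex_volume x0 v).
  change (Rabs (lam ord0 j) * simplex_volume x0 v < rho * simplex_volume x0 v -> lam ord0 j < rho).
  have := Rle_abs (lam ord0 j); nra.
Qed.

Lemma minkowski_asymmetry_approx K rho : convex_body K -> 1 < rho ->
  exists y, forall k, K k -> homot y ((INR d + 1) * rho - 1) K (vscale (-1) k).
Proof.
move=> K_body rho_gt1.
have [x0 [v [Kv [v_pos v_max]]]] := exists_near_max_simplex K_body rho_gt1.
exists (fun i => - (rho * \big[Rplus/0]_(j < d.+1) v j i)) => k Kk.
have [lam [sum1 [coords lam_lt]]] := barycentric_lt Kv v_pos v_max Kk.
have W_eq : \big[Rplus/0]_(j < d.+1) (rho - lam j) = (INR d + 1) * rho - 1.
  have -> : \big[Rplus/0]_(j < d.+1) (rho - lam j) =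
      \big[Rplus/0]_(j < d.+1) rho - \big[Rplus/0]_(j < d.+1) lam j by combine_sums; ring.
  by rewrite sum1 Rsum_const_ord S_INR; ring.
have W_gt0 : 0 < (INR d + 1) * rho - 1 by have := pos_INR d; nra.
exists (fun c => \big[Rplus/0]_(j < d.+1) ((rho - lam j) * v j c) /
  \big[Rplus/0]_(j < d.+1) (rho - lam j)); split.
  apply: convex_weighted_mean => //; [exact: K_body.2.1 | | by rewrite W_eq].
  by move=> j; have := lam_lt j; lra.
apply: functional_extensionality => i; rewrite /vadd /vscale W_eq.
have -> : \big[Rplus/0]_(j < d.+1) ((rho - lam j) * v j i) =
    rho * \big[Rplus/0]_(j < d.+1) v j i - \big[Rplus/0]_(j < d.+1) (lam j * v j i).
  by combine_sums; ring.
rewrite coords; field; lra.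
Qed.

End Asymmetry.

Lemma dot_vec1 (x y : vec 1) : dot x y = x ord0 * y ord0.
Proof. by rewrite /dot big_ord1. Qed.

Lemma segment_endpoint_mem (K : vec 1 -> Prop) u sg h : is_closed K -> sg * sg = 1 ->
  (forall k, dot u k = sg * k ord0) -> is_lub (dot_image K u) h -> K (fun _ => sg * h).
Proof.
move=> K_closed sg2 dot_u h_lub; apply: closed_mem_of_approx => // eps eps_gt0.
have [_ [[k [Kk ->]] k_near]] := is_lub_approx h_lub (b := h - eps) ltac:(lra).
have k_le := h_lub.1 _ (ex_intro _ k (conj Kk erefl)).
exists k; split=> //; apply/ball_iff => //; rewrite /sqdist dot_vec1 /vsub.
rewrite dot_u in k_near k_le.
have -> : (k ord0 - sg * h) * (k ord0 - sg * h) = (sg * k ord0 - h) * (sg * k ord0 - h) by nra.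
nra.
Qed.

Lemma segment_symmetric (K : vec 1 -> Prop) : convex_body K ->
  exists y, forall k, K k -> homot y 1 K (vscale (-1) k).
Proof.
move=> K_body; have [[K_closed K_bounded] [K_convex _]] := K_body.
have K_ne := convex_body_nonempty K_body.
pose e : vec 1 := fun _ => 1.
have [b b_lub] := support_exists e K_bounded K_ne.
have [a' a_lub] := support_exists (vscale (-1) e) K_bounded K_ne.
have dot_e k : dot e k = 1 * k ord0 by rewrite dot_vec1.
have dot_me k : dot (vscale (-1) e) k = -1 * k ord0 by rewrite dot_vscale_l dot_e; ring.
have Kb := @segment_endpoint_mem K e 1 b K_closed ltac:(ring) dot_e b_lub.
have Ka := @segment_endpoint_mem K _ (-1) a' K_closed ltac:(ring) dot_me a_lub.
exists (fun _ => - (b - a')) => k Kk.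
have k_le := b_lub.1 _ (ex_intro _ k (conj Kk erefl)).
have k_ge := a_lub.1 _ (ex_intro _ k (conj Kk erefl)).
rewrite dot_e in k_le; rewrite dot_me in k_ge.
have [t [t01 t_eq]] : exists t, 0 <= t <= 1 /\ b - a' - k ord0 = t * (-1 * a') + (1 - t) * (1 * b).
  case: (Rle_lt_or_eq_dec (- a') b ltac:(lra)) => [ab | ab]; last by exists 1; split; lra.
  exists ((k ord0 + a') / (b + a')).
  have : (k ord0 + a') / (b + a') * (b + a') = k ord0 + a' by field; lra.
  by split; [split; nra | field; lra].
exists (fun _ => b - a' - k ord0); split.
  have := K_convex _ _ t Ka Kb t01; congr K.
  by apply: functional_extensionality => i; rewrite /vadd /vscale t_eq.
apply: functional_extensionality => i; have -> : i = ord0 by rewrite (ord1 i).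
by rewrite /vadd /vscale; ring.
Qed.

(* The slack e (d - 1) vanishes on the line, where -K is exactly a translate of K. *)
Lemma minkowski_asymmetry d (K : vec d -> Prop) e : convex_body K -> (1 <= d)%N -> 0 < e ->
  exists y, forall k, K k -> homot y (INR d + e * (INR d - 1)) K (vscale (-1) k).
Proof.
case: d K => [//|[|d]] K K_body _ e_gt0.
  by rewrite (_ : INR 1 + e * (INR 1 - 1) = 1) /=; [apply: segment_symmetric | ring].
have d_ge2 : 2 <= INR d.+2 by rewrite !S_INR; have := pos_INR d; lra.
pose rho := 1 + e * (INR d.+2 - 1) / (INR d.+2 + 1).
have rho_gt1 : 1 < rho.
  suff : 0 < e * (INR d.+2 - 1) / (INR d.+2 + 1) by rewrite /rho; lra.
  by apply: Rdiv_lt_0_compat; nra.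
rewrite (_ : INR d.+2 + e * (INR d.+2 - 1) = (INR d.+2 + 1) * rho - 1).
  exact: minkowski_asymmetry_approx.
by rewrite /rho; field; lra.
Qed.

Section NonSeparableHomothets.
Variables (d n : nat) (K : vec d -> Prop) (o : 'I_n -> vec d) (tau : 'I_n -> R).
Hypotheses (K_body : convex_body K) (tau_gt0 : forall i, 0 < tau i)
  (F_ns : non_separable (fun i => homot (o i) (tau i) K)).

Definition scale_sum : R := \big[Rplus/0]_(i < n) tau i.
Definition scale_sqsum : R := \big[Rplus/0]_(i < n) (tau i * tau i).
Definition weighted_center : vec d :=
  vscale (/ scale_sum) (fun j => \big[Rplus/0]_(i < n) (tau i * o i j)).

Local Notation S := scale_sum.
Local Notation Q := scale_sqsum.

Lemma scale_sqsum_le : 0 <= Q <= S * S.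
Proof.
split; first by apply: Rsum_ge0 => i _; have := tau_gt0 i; nra.
by apply: Rsum_sq_le => i; apply: Rlt_le.
Qed.

Lemma union_support_le u hu g x : nonzero u ->
  is_lub (dot_image K u) hu -> is_lub (dot_image K (vscale (-1) u)) g ->
  family_union (fun i => homot (o i) (tau i) K) x ->
  2 * S * dot u x <=
    2 * \big[Rplus/0]_(i < n) (tau i * dot u (o i)) + (hu - g) * Q + (hu + g) * (S * S).
Proof.
move=> u_neq0 hu_lub g_lub [j Fjx].
pose a i := dot u (o i) - tau i * g.
pose b i := dot u (o i) + tau i * hu.
have b_lub i : is_lub (dot_image (homot (o i) (tau i) K) u) (b i).
  exact: support_homot.
have a_lub i : is_lub (dot_image (homot (o i) (tau i) K) (vscale (-1) u)) (- a i).
  have -> : - a i = dot (vscale (-1) u) (o i) + tau i * g by rewrite dot_vscale_l /a; ring.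
  exact: support_homot.
have w_gt0 := support_width_gt0 K_body.2.2 u_neq0 hu_lub g_lub.
have [m m_max] := exists_argmax b j.
have ab i : i \in index_enum 'I_n -> a i <= b i <= b m.
  by move=> _; have := m_max i; have := tau_gt0 i; rewrite /a /b; nra.
have [sum_le _] := interval_cover_sum_le ab (non_separable_cover (m := m) F_ns u_neq0 b_lub a_lub).
have sum_eq : \big[Rplus/0]_(i <- index_enum 'I_n) ((b i - a i) * (2 * b m - a i - b i)) =
    (hu + g) * (2 * b m * S - 2 * \big[Rplus/0]_(i < n) (tau i * dot u (o i)) - (hu - g) * Q).
  by rewrite /scale_sum /scale_sqsum; combine_sums; rewrite /a /b; ring.
have len_eq : \big[Rplus/0]_(i <- index_enum 'I_n) (b i - a i) = (hu + g) * S.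
  by rewrite /scale_sum; combine_sums; rewrite /a /b; ring.
rewrite sum_eq len_eq in sum_le.
have x_le : dot u x <= b m.
  by have := (b_lub j).1 _ (ex_intro _ x (conj Fjx erefl)); have := m_max j; lra.
have S_ge0 : 0 <= S by apply: Rsum_ge0 => i _; apply: Rlt_le.
set P := \big[Rplus/0]_(i < n) (tau i * dot u (o i)) in sum_le *.
have : 2 * b m * S - 2 * P - (hu - g) * Q <= (hu + g) * (S * S).
  by apply: (Rmult_le_reg_l (hu + g)) => //; lra.
have : S * dot u x <= S * b m by apply: Rmult_le_compat_l.
lra.
Qed.

Lemma non_separable_union_subset y D x : 0 < S -> 0 <= D ->
  (forall k, K k -> homot y D K (vscale (-1) k)) ->
  family_union (fun i => homot (o i) (tau i) K) x ->
  homot (vadd weighted_center (vscale ((S * S - Q) / (2 * S)) y))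
    ((S * S + Q + D * (S * S - Q)) / (2 * S)) K x.
Proof.
move=> S_gt0 D_ge0 K_sym Fx.
have [[K_closed K_bounded] [K_convex _]] := K_body.
have K_ne := convex_body_nonempty K_body.
have [Q_ge0 Q_le] := scale_sqsum_le.
apply: homot_of_support_le => //; first by apply: Rdiv_lt_0_compat; nra.
move=> u h u_neq0 h_lub.
have [g g_lub] := support_exists (vscale (-1) u) K_bounded K_ne.
have x_le := union_support_le u_neq0 h_lub g_lub Fx.
have g_le := support_opp_le D_ge0 K_sym h_lub g_lub.
rewrite /weighted_center dot_vadd_r !dot_vscale_r dot_sum_r.
set P := \big[Rplus/0]_(i < n) (tau i * dot u (o i)) in x_le *.
apply: (Rmult_le_reg_l (2 * S)); first lra.
have -> : 2 * S * (/ S * P + (S * S - Q) / (2 * S) * dot u y +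
      (S * S + Q + D * (S * S - Q)) / (2 * S) * h)
    = 2 * P + (S * S - Q) * dot u y + (S * S + Q + D * (S * S - Q)) * h by field; lra.
have : g * (S * S - Q) <= (dot u y + D * h) * (S * S - Q) by apply: Rmult_le_compat_r; lra.
lra.
Qed.

End NonSeparableHomothets.

(* The radius of non_separable_union_subset for D = m + e (m - 1) with e = Q / S^2. *)
Lemma asymmetric_radius_le (m S Q : R) : 1 <= m -> 0 < S -> 0 <= Q <= S * S ->
  0 <= (S * S + Q + (m + Q / (S * S) * (m - 1)) * (S * S - Q)) / (2 * S) <= (m + 1) / 2 * S.
Proof.
move=> m_ge1 S_gt0 Q_bounds.
have SS_gt0 : 0 < S * S by nra.
have D_ge0 : 0 <= Q / (S * S) * (m - 1) by apply: Rmult_le_pos; [apply: Rle_mult_inv_pos |]; lra.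
split; first by apply: Rle_mult_inv_pos; nra.
have -> : (m + 1) / 2 * S = (S * S + Q + (m + Q / (S * S) * (m - 1)) * (S * S - Q)) / (2 * S)
    + (m - 1) * (Q * Q) / (2 * (S * S) * S) by field; lra.
have : 0 <= (m - 1) * (Q * Q) / (2 * (S * S) * S) by apply: Rle_mult_inv_pos; nra.
lra.
Qed.

Theorem corollary6 (d n : nat) (K : vec d -> Prop) (o : 'I_n -> vec d)
  (tau : 'I_n -> R) :
  convex_body K ->
  (forall i, 0 < tau i) ->
  non_separable (fun i => homot (o i) (tau i) K) ->
  exists t : vec d,
    forall x, family_union (fun i => homot (o i) (tau i) K) x ->
      homot t ((INR d + 1) / 2 * \big[Rplus/0]_(i < n) tau i) K x.
Proof.
move=> K_body tau_gt0 F_ns.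
have [x0 Kx0] := convex_body_nonempty K_body.
case: n o tau tau_gt0 F_ns => [|n] o tau tau_gt0 F_ns; first by exists x0 => x [[]].
case: d K o K_body F_ns x0 Kx0 => [|d] K o K_body F_ns x0 Kx0.
  by exists x0 => x _; exists x0; split=> //; apply: functional_extensionality => -[].
have S_gt0 : 0 < scale_sum tau := Rsum_gt0_ord tau_gt0.
have Q_gt0 : 0 < scale_sqsum tau by apply: Rsum_gt0_ord => i; have := tau_gt0 i; nra.
have [_ Q_le] := scale_sqsum_le tau_gt0.
rewrite -/(scale_sum tau); set S := scale_sum tau in S_gt0 Q_le *.
set Q := scale_sqsum tau in Q_gt0 Q_le *.
have [y y_sym] : exists y, forall k, K k ->
    homot y (INR d.+1 + Q / (S * S) * (INR d.+1 - 1)) K (vscale (-1) k).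
  by apply: minkowski_asymmetry => //; apply: Rdiv_lt_0_compat; nra.
have d_ge1 : 1 <= INR d.+1 by rewrite S_INR; have := pos_INR d; lra.
have [c_ge0 c_le] := asymmetric_radius_le d_ge1 S_gt0 (conj (Rlt_le _ _ Q_gt0) Q_le).
have D_ge0 : 0 <= INR d.+1 + Q / (S * S) * (INR d.+1 - 1).
  have : 0 <= Q / (S * S) * (INR d.+1 - 1) by apply: Rmult_le_pos; [apply: Rle_mult_inv_pos|]; nra.
  lra.
eexists => x Fx.
apply: homot_scale_le K_body.2.1 Kx0 (conj c_ge0 c_le) _
  (non_separable_union_subset K_body tau_gt0 F_ns S_gt0 D_ge0 y_sym Fx).
nra.
Qed.
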